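(* Let $G$ be a Gauss diagram with an over-bridge or under-bridge $v_0,v_1,\dots,v_{k+1}$ ($k\ge1$), and let $G'$ be the Gauss diagram obtained from $G$ by removing every chord having one of $v_1,\dots,v_k$ as an endpoint. Then $g(G)>g(G')$ if and only if there is a cycle of $G$ which, for some $0\le i\ne j\le k$, passes along the circle both from $v_i$ to $v_{i+1}$ and from $v_j$ to $v_{j+1}$.
   Context: A Gauss diagram is an oriented circle together with $n$ signed, oriented chords, each connecting two distinct points of the circle, all $2n$ endpoints being distinct. An over-bridge (resp. under-bridge) of length $k$ of a Gauss diagram is a sequence $v_0,\dots,v_{k+1}$ of consecutive chord endpoints along the oriented circle such that $v_1,\dots,v_k$ are all initial (resp. all terminal) points of their chords. The canonical surface $\Sigma_G$ is obtained from the annulus $S^1\times[0,1]$ by attaching, for each chord, a band to small neighborhoods of its two endpoints in $S^1\times\{0\}$ so that the result is oriented, and then capping every boundary component except $S^1\times\{1\}$ with a disk; $g(G)$ is the genus of $\Sigma_G$. A cycle in $G$ is obtained by starting at an endpoint $x$ of a chord and repeating: (i) move along the current chord to its other endpoint, (ii) move along the circle (in its orientation) to the next chord endpoint $y$, and continue from $y$, until returning to $x$ in step (ii). One has $g(G)=(n-s_G+1)/2$, $s_G$ the number of cycles ($s_G=1$ if there are no chords). *)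

From mathcomp Require Import all_boot all_order all_algebra.
Set Implicit Arguments. Unset Strict Implicit. Unset Printing Implicit Defensive.
Import GRing.Theory Num.Theory.

(* A Gauss diagram is encoded by its Gauss word: the list of the 2n chord
   endpoints in the order met when going once around the oriented circle
   (starting at an arbitrary base point).  An endpoint is a pair (c, b) where
   c : nat is the label of its chord and b = true iff it is the INITIAL point
   of that chord (b = false: terminal point).  Chord signs are recorded by
   gd_sign (they play no role for the genus). *)
Record gauss_diagram := GD { gd_word : seq (nat * bool); gd_sign : nat -> bool }.

Definition gauss_wf (G : gauss_diagram) : bool :=
  uniq (gd_word G) && all (fun e => (e.1, ~~ e.2) \in gd_word G) (gd_word G).

Definition npts (G : gauss_diagram) : nat := size (gd_word G).

Definition nchords (G : gauss_diagram) : nat := count (fun e => e.2) (gd_word G).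

Definition endpt (G : gauss_diagram) (i : nat) : nat * bool :=
  nth (0, true) (gd_word G) i.

Definition mate (G : gauss_diagram) (i : 'I_(npts G)) : 'I_(npts G) :=
  insubd i (index ((endpt G i).1, ~~ (endpt G i).2) (gd_word G)).

(* one full step of the cycle construction: (i) along the chord, then
   (ii) along the circle to the next endpoint *)
Definition cstep (G : gauss_diagram) (i : 'I_(npts G)) : 'I_(npts G) :=
  ordS (mate i).

(* the cycle through x, as the list of points y reached after step (ii) *)
Definition gcycle (G : gauss_diagram) (x : 'I_(npts G)) : seq 'I_(npts G) :=
  orbit (@cstep G) x.

Definition ncycles (G : gauss_diagram) : nat :=
  if npts G == 0 then 1
  else #|[set [set y in gcycle x] | x : 'I_(npts G)]|.

Definition genus (G : gauss_diagram) : rat :=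
  ((nchords G)%:R - (ncycles G)%:R + 1) / 2.

(* the cycle C passes along the circle from position a to the next endpoint:
   some step (i) of C ends at a (and step (ii) then moves from a onwards) *)
Definition passes_from (G : gauss_diagram) (C : seq 'I_(npts G)) (a : nat) : Prop :=
  exists2 y, y \in C & nat_of_ord (mate y) = a.

Definition vpos (G : gauss_diagram) (p t : nat) : nat := (p + t) %% npts G.

(* v_0,...,v_{k+1} (starting at position p < 2n) is an over-bridge (b = true)
   or an under-bridge (b = false) of length k *)
Definition is_bridge (G : gauss_diagram) (b : bool) (p k : nat) : Prop :=
  p < npts G /\ forall t, 1 <= t <= k -> (endpt G (vpos G p t)).2 = b.

Definition remove_bridge_chords (G : gauss_diagram) (p k : nat) : gauss_diagram :=
  let L := [seq (endpt G (vpos G p t)).1 | t <- iota 1 k] in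
  GD [seq e <- gd_word G | e.1 \notin L] (gd_sign G).

From mathcomp Require Import all_boot all_order all_algebra all_fingroup.
From mathcomp Require Import zify lra.
Import GRing.Theory Num.Theory.
Set Implicit Arguments. Unset Strict Implicit. Unset Printing Implicit Defensive.

(* The cycle construction is the
   permutation sigma = ordS o mate, and the cycles of G are its orbits.  Let
   v_t be the t-th point of the bridge and w_t the other endpoint of its chord.
   Removing the chords through v_1, ..., v_k corresponds to the permutation
       skip = (v_k w_k) ... (v_1 w_1) sigma,
   which moves a position of a removed chord to the next position and agrees
   with sigma elsewhere; its orbits are the cycles of G' (removed positions are
   just passed over).  By porbits_mul_tperm each transposition changes the
   number of orbits by +1 if v_m, w_m already share an orbit (a "split") and
   by -1 otherwise, so g(G') < g(G) iff some step splits.  Since all bridge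
   points have the same type, the partial product sends w_m to v_(m+1), and an
   induction shows that a split occurs iff two of v_1, ..., v_(k+1) lie on one
   sigma-orbit: this is the cycle condition of the theorem. *)

Section OrbitsTransposition.
Variable T : finType.
Implicit Types (s : {perm T}) (a b c x y : T).

Lemma porbit_trans s a b c :
  b \in porbit s a -> c \in porbit s b -> c \in porbit s a.
Proof. by rewrite -!eq_porbit_mem => /eqP <- /eqP ->. Qed.

Lemma porbit_step s a b : b \in porbit s a -> s b \in porbit s a.
Proof. by move/porbit_trans; apply; rewrite -{1}(expg1 s) mem_porbit. Qed.

Lemma porbit_tperm_out s x y a : x \notin porbit s a -> y \notin porbit s a ->
  porbit (tperm x y * s)%g a = porbit s a.
Proof.
move=> xNa yNa.
have iterE n : ((tperm x y * s) ^+ n)%g a = (s ^+ n)%g a.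
  elim: n => // n IH; rewrite !expgSr !permM IH tpermD //.
    by apply: contraNneq xNa => ->; apply: mem_porbit.
  by apply: contraNneq yNa => ->; apply: mem_porbit.
by apply/setP => u; apply/porbitP/porbitP => -[i ->]; exists i; rewrite iterE.
Qed.

Lemma mem_porbit_tperm s x y a b : b \in porbit (tperm x y * s)%g a ->
  b \in porbit s a \/ ((x \in porbit s a \/ y \in porbit s a) /\
                       (x \in porbit s b \/ y \in porbit s b)).
Proof.
move=> ab.
have [xya | ] := boolP ((x \in porbit s a) || (y \in porbit s a)); last first.
  by rewrite negb_or => /andP[xNa yNa]; left; rewrite -(porbit_tperm_out xNa yNa).
have [xyb | ] := boolP ((x \in porbit s b) || (y \in porbit s b)).
  by right; split; apply/orP.
rewrite negb_or => /andP[xNb yNb]; left.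
by rewrite porbit_sym -(porbit_tperm_out xNb yNb) -porbit_sym.
Qed.

Lemma porbit_tperm_merge s x y : x != y -> x \notin porbit s y ->
  (forall a b, b \in porbit s a -> b \in porbit (tperm x y * s)%g a) /\
  x \in porbit (tperm x y * s)%g y.
Proof.
move=> xy xNy; set u := (tperm x y * s)%g.
have su : s = (tperm x y * u)%g by rewrite /u mulgA tperm2 mul1g.
have xy_u : x \in porbit u y.
  apply/negPn/negP => xNy_u.
  move: (porbits_mul_tperm s x y) (porbits_mul_tperm u x y) => /=.
  by rewrite -/u -su xNy_u xNy xy /=; lia.
split=> // a b ab; rewrite su in ab.
have [//|[xya xyb]] := mem_porbit_tperm ab.
have to_x c : x \in porbit u c \/ y \in porbit u c -> x \in porbit u c.
  by case=> // yc; apply: porbit_trans yc xy_u.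
by apply: porbit_trans (to_x _ xya) _; rewrite porbit_sym; apply: to_x.
Qed.
End OrbitsTransposition.

(* Step m+1 "splits" when v_(m+1) and
   w_(m+1) already lie on one orbit of s_m; the number of orbits then grows by
   one, otherwise it drops by one. *)
Section TranspositionChain.
Variables (T : finType) (s : {perm T}) (v w : nat -> T) (k : nat).

Fixpoint tchain m : {perm T} :=
  if m is m'.+1 then (tperm (v m) (w m) * tchain m')%g else s.

Hypothesis v_neq_w : forall m, m < k -> v m.+1 != w m.+1.
Hypothesis tchain_w : forall m, m < k -> tchain m (w m.+1) = v m.+2.

Definition splits m := v m.+1 \in porbit (tchain m) (w m.+1).

Lemma card_porbits_tchain m : m <= k ->
  #|porbits (tchain m)| + m = #|porbits s| + (2 * count splits (iota 0 m))%N.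
Proof.
elim: m => [|m IH] le_mk; first by rewrite /= muln0 !addn0.
rewrite -addn1 iotaD count_cat /= addn0 addn1.
have := porbits_mul_tperm (tchain m) (v m.+1) (w m.+1).
rewrite /= (v_neq_w le_mk) -/(tchain m.+1).
have := IH (ltnW le_mk); rewrite /splits.
by case: (v m.+1 \in _) => /= IHm step; rewrite -muln2 in step; lia.
Qed.

Lemma tchain_gain_iff_split :
  #|porbits s| < #|porbits (tchain k)| + k <-> exists2 m, m < k & splits m.
Proof.
rewrite card_porbits_tchain //; split=> [gain | [m lt_mk sm]].
  have : has splits (iota 0 k) by rewrite has_count; lia.
  by case/hasP=> m; rewrite mem_iota => /andP[_ lt_mk] sm; exists m.
have : has splits (iota 0 k) by apply/hasP; exists m; rewrite ?mem_iota.
by rewrite has_count; lia.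
Qed.

Lemma tchain_w_orbit m : m < k -> v m.+2 \in porbit (tchain m) (w m.+1).
Proof. by move=> lt_mk; rewrite -tchain_w //; apply/porbit_step/porbit_id. Qed.

Lemma porbit_tchain m : m <= k -> forall a b, b \in porbit (tchain m) a ->
  b \in porbit s a \/
  ((exists i, 1 <= i <= m.+1 /\ v i \in porbit s a) /\
   (exists j, 1 <= j <= m.+1 /\ v j \in porbit s b)).
Proof.
elim: m => [|m IH] le_mk a b ab; first by left.
have {}IH := IH (ltnW le_mk).
have reach c : v m.+1 \in porbit (tchain m) c \/ w m.+1 \in porbit (tchain m) c ->
    exists i, 1 <= i <= m.+2 /\ v i \in porbit s c.
  case=> [vc | /porbit_trans/(_ (tchain_w_orbit le_mk)) vc].
    have [?|[[i [? ?]] _]] := IH _ _ vc; first by exists m.+1; split=> //; lia.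
    by exists i; split=> //; lia.
  have [?|[[i [? ?]] _]] := IH _ _ vc; first by exists m.+2; split=> //; lia.
  by exists i; split=> //; lia.
case: (mem_porbit_tperm ab) => [/IH [?|[[i [? ?]] [j [? ?]]]] | [ra rb]].
- by left.
- by right; split; [exists i | exists j]; split=> //; lia.
- by right; split; apply: reach.
Qed.

Lemma porbit_tchain_nosplit m : (forall m', m' < k -> ~ splits m') -> m <= k ->
  (forall a b, b \in porbit s a -> b \in porbit (tchain m) a) /\
  (forall i, 1 <= i <= m.+1 -> v i \in porbit (tchain m) (v 1)).
Proof.
move=> nosplit; elim: m => [|m IH] le_mk.
  split=> // i /andP[i1 i1']; have -> : i = 1 by lia.
  exact: porbit_id.
have [sub_m v_m] := IH (ltnW le_mk).
have vNw : v m.+1 \notin porbit (tchain m) (w m.+1) by apply/negP/nosplit.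
have [merge merged] := porbit_tperm_merge (v_neq_w le_mk) vNw.
split=> [a b ab | i /andP[i1 im]]; first exact/merge/sub_m.
have [lt_im | ge_im] := ltnP i m.+2; first by apply/merge/v_m; lia.
have -> : i = m.+2 by lia.
have w_v : v m.+2 \in porbit (tchain m.+1) (w m.+1) by apply/merge/tchain_w_orbit.
have v1 : v m.+1 \in porbit (tchain m.+1) (v 1) by apply/merge/v_m; lia.
by apply: porbit_trans v1 _; apply: porbit_trans _ w_v; rewrite porbit_sym merged.
Qed.

Lemma split_iff_shared_orbit :
  (exists2 m, m < k & splits m) <->
  (exists i j, [/\ 1 <= i, i < j, j <= k.+1 & v j \in porbit s (v i)]).
Proof.
split=> [[m lt_mk sm] | [i [j [i1 lt_ij le_jk ij]]]].
  have v_m : v m.+2 \in porbit (tchain m) (v m.+1).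
    by apply: porbit_trans (tchain_w_orbit lt_mk); rewrite porbit_sym.
  have [?|[_ [j [? ?]]]] := porbit_tchain (ltnW lt_mk) v_m.
    by exists m.+1, m.+2; split=> //; lia.
  by exists j, m.+2; split=> //; [lia | lia | rewrite porbit_sym].
have [/hasP[m lt_mk sm] | nosplit] := boolP (has splits (iota 0 k)).
  by move: lt_mk; rewrite mem_iota => /andP[_ lt_mk]; exists m.
have {}nosplit m : m < k -> ~ splits m.
  by move=> lt_mk sm; case/hasP: nosplit; exists m; rewrite ?mem_iota.
exfalso; have lt_jk : j.-2 < k by lia.
have [coarse same] := porbit_tchain_nosplit nosplit (ltnW lt_jk).
apply: (nosplit _ lt_jk); rewrite /splits.
have := tchain_w_orbit lt_jk; rewrite (_ : j.-2.+2 = j); last by lia.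
move/porbit_trans; apply; rewrite porbit_sym.
have v1 : v j.-2.+1 \in porbit (tchain j.-2) (v 1) by apply: same; lia.
rewrite porbit_sym in v1; apply: porbit_trans v1 _.
by apply: porbit_trans (coarse _ _ ij); apply: same; lia.
Qed.
End TranspositionChain.

Section CyclePermutation.
Variable G : gauss_diagram.
Hypothesis wf : gauss_wf G.
Local Notation N := (npts G).

Definition partner (e : nat * bool) : nat * bool := (e.1, ~~ e.2).

Lemma gd_uniq : uniq (gd_word G). Proof. by case/andP: wf. Qed.

Lemma partner_in e : e \in gd_word G -> partner e \in gd_word G.
Proof. by case/andP: wf => _ /allP; apply. Qed.

Lemma endpt_in (x : 'I_N) : endpt G x \in gd_word G.
Proof. exact: mem_nth. Qed.

Lemma endpt_inj : injective (endpt G : 'I_N -> _).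
Proof.
move=> x y exy; apply/val_inj/eqP.
by rewrite -(nth_uniq (0, true) (ltn_ord x) (ltn_ord y) gd_uniq); apply/eqP.
Qed.

Lemma endpt_mate (x : 'I_N) : endpt G (mate x) = partner (endpt G x).
Proof.
have px := partner_in (endpt_in x).
by rewrite /endpt /mate /insubd insubT ?index_mem //= nth_index.
Qed.

Lemma mateK : involutive (@mate G).
Proof. by move=> x; apply: endpt_inj; rewrite !endpt_mate; case: (endpt G x) => c []. Qed.

Lemma mate_neq (x : 'I_N) : mate x != x.
Proof.
apply/eqP => mx; have := endpt_mate x; rewrite mx /partner.
by case: (endpt G x) => c [] [].
Qed.

Lemma cstep_inj : injective (@cstep G).
Proof. by move=> x y /ordS_inj mxy; rewrite -(mateK x) mxy mateK. Qed.

Definition cycle_perm : {perm 'I_N} := perm cstep_inj.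

Lemma cycle_permE x : cycle_perm x = ordS (mate x). Proof. by rewrite permE. Qed.

Lemma mem_gcycle (x y : 'I_N) : (y \in gcycle x) = (y \in porbit cycle_perm x).
Proof.
have iterE n : iter n (@cstep G) x = (cycle_perm ^+ n)%g x.
  by rewrite permX; apply: eq_iter => z; rewrite permE.
rewrite /gcycle -fconnect_orbit; apply/idP/porbitP => [/iter_findex <- | [n ->]].
  by exists (findex (@cstep G) x y).
by rewrite -iterE fconnect_iter.
Qed.

Lemma ncycles_porbits : 0 < N -> ncycles G = #|porbits cycle_perm|.
Proof.
rewrite /ncycles /porbits lt0n => /negbTE ->.
apply: eq_card => S; apply/imsetP/imsetP => -[x _ ->]; exists x => //;
  by apply/setP => y; rewrite inE mem_gcycle.
Qed.

Lemma passes_fromE (x : 'I_N) (a : 'I_N) :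
  passes_from (gcycle x) a <-> ordS a \in porbit cycle_perm x.
Proof.
split=> [[y xy /val_inj ya] | xa].
  by rewrite mem_gcycle in xy; have := porbit_step xy; rewrite cycle_permE ya.
exists (mate a); last by rewrite mateK.
rewrite mem_gcycle; apply: porbit_trans xa _; rewrite porbit_sym.
have <- : cycle_perm (mate a) = ordS a by rewrite cycle_permE mateK.
exact/porbit_step/porbit_id.
Qed.
End CyclePermutation.

Section Bridge.
Variable G : gauss_diagram.
Hypothesis wf : gauss_wf G.
Variables (b : bool) (p k : nat).
Hypothesis k_gt0 : 0 < k.
Hypothesis bridge : is_bridge G b p k.
Local Notation N := (npts G).
Local Notation sigma := (cycle_perm wf).

Definition label (x : 'I_N) : nat := (endpt G x).1.

Lemma N_gt0 : 0 < N. Proof. by case: bridge => pN _; apply: leq_ltn_trans pN. Qed.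

Definition v (t : nat) : 'I_N := Ordinal (ltn_pmod (p + t) N_gt0).
Definition w (t : nat) : 'I_N := mate (v t).

Lemma v_type t : 1 <= t <= k -> (endpt G (v t)).2 = b.
Proof. by case: bridge => _; apply. Qed.

Lemma ordS_v t : ordS (v t) = v t.+1.
Proof. by apply: val_inj; rewrite /= -addn1 modnDml addn1 addnS. Qed.

Lemma v_onto (x : 'I_N) : exists2 t, 1 <= t <= N & v t = x.
Proof.
have pN : p < N by case: bridge.
exists ((x + N - p.+1) %% N).+1; first by have := ltn_pmod (x + N - p.+1) N_gt0; lia.
apply: val_inj; rewrite /= addnS -addSn modnDmr.
by rewrite (_ : p.+1 + _ = x + N) ?modnDr ?modn_small //; have := ltn_ord x; lia.
Qed.

(* a bridge cannot contain both endpoints of a chord, so it is short *)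
Lemma k_lt_N : k < N.
Proof.
rewrite ltnNge; apply/negP => le_Nk.
have [t /andP[t1 tN] vt] := v_onto (w 1).
have tk : 1 <= t <= k by rewrite t1 (leq_trans tN le_Nk).
have v1 : (endpt G (v 1)).2 = b by apply: v_type; rewrite leqnn.
have := v_type tk; rewrite vt /w (endpt_mate wf).
by case: (endpt G (v 1)) v1 => c d /= ->; case: b.
Qed.

Lemma v_inj s t : s < N -> t < N -> v s = v t -> s = t.
Proof.
by move=> sN tN /(congr1 val) /eqP; rewrite /= eqn_modDl !modn_small // => /eqP.
Qed.

Lemma label_v_inj s t : 1 <= s <= k -> 1 <= t <= k -> label (v s) = label (v t) -> s = t.
Proof.
move=> sk tk lst; have kN := k_lt_N; apply: v_inj; try lia.
apply: (endpt_inj wf); move: lst; rewrite /label => lst.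
by rewrite [endpt G (v s)]surjective_pairing [endpt G (v t)]surjective_pairing lst !v_type.
Qed.

Lemma label_w t : label (w t) = label (v t).
Proof. by rewrite /label /w (endpt_mate wf). Qed.

Lemma label_eq x t : label x = label (v t) -> x = v t \/ x = w t.
Proof.
rewrite /label => lx; have [eq_type | neq_type] := eqVneq (endpt G x).2 (endpt G (v t)).2.
  by left; apply: (endpt_inj wf); rewrite [LHS]surjective_pairing [RHS]surjective_pairing lx eq_type.
right; apply: (endpt_inj wf); rewrite /w (endpt_mate wf) /partner.
by move: lx neq_type; case: (endpt G x) => c [] /= ->; case: (endpt G (v t)) => ? [].
Qed.

Definition removed (m : nat) : seq nat := [seq (endpt G (vpos G p t)).1 | t <- iota 1 m].

Lemma mem_removed m x :
  reflect (exists2 t, 1 <= t <= m & label x = label (v t)) (label x \in removed m).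
Proof.
by apply: (iffP mapP) => -[t tm lx]; exists t => //; move: tm; rewrite ?mem_iota; lia.
Qed.

Lemma removedS m : removed m.+1 = rcons (removed m) (label (v m.+1)).
Proof. by rewrite /removed -[m.+1]addn1 iotaD map_cat cats1 /= addnC. Qed.

Lemma label_v_notin m : m < k -> label (v m.+1) \notin removed m.
Proof.
move=> lt_mk; apply/mem_removed => -[t tm same_label].
have m1k : 1 <= m.+1 <= k by lia.
have tk : 1 <= t <= k by lia.
by have := label_v_inj m1k tk same_label; lia.
Qed.

Lemma removed_uniq : uniq (removed k).
Proof.
rewrite map_inj_in_uniq ?iota_uniq // => s t; rewrite !mem_iota => sk tk.
by apply: label_v_inj; lia.
Qed.

Local Notation chain := (tchain sigma v w).

Lemma tchainE m x : m <= k ->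
  chain m x = if label x \in removed m then ordS x else sigma x.
Proof.
elim: m x => [|m IH] x le_mk //=.
rewrite permM removedS mem_rcons in_cons.
have vN := label_v_notin le_mk; rewrite !IH ?(ltnW le_mk) //.
case: tpermP => [-> | -> | xv xw].
- by rewrite label_w (negbTE vN) eqxx (cycle_permE wf) /w (mateK wf).
- by rewrite label_w (negbTE vN) eqxx (cycle_permE wf).
- by case: eqP => // /label_eq [/xv | /xw].
Qed.

(* the hypotheses of the transposition chain hold along the bridge: the
   chord at w_(m+1) is not yet removed, so s_m w_(m+1) = v_(m+2) *)
Lemma v_neq_w m : v m.+1 != w m.+1.
Proof. by rewrite eq_sym (mate_neq wf). Qed.

Lemma chain_w m : m < k -> chain m (w m.+1) = v m.+2.
Proof.
move=> lt_mk; rewrite tchainE ?(ltnW lt_mk) // label_w (negbTE (label_v_notin lt_mk)).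
by rewrite (cycle_permE wf) /w (mateK wf) ordS_v.
Qed.

(* G' keeps the positions q of G whose chord is not removed; its word lists
   them in increasing order, kpos i being the i-th kept position. *)
Definition kept (q : nat) : bool := (nth (0, true) (gd_word G) q).1 \notin removed k.
Definition kept_pos : seq nat := [seq q <- iota 0 N | kept q].
Definition kpos (i : nat) : nat := nth 0 kept_pos i.
Local Notation G' := (remove_bridge_chords G p k).
Local Notation N' := (npts G').

Lemma word_removed : gd_word G' = map (nth (0, true) (gd_word G)) kept_pos.
Proof. by rewrite /= -{1}(mkseq_nth (0, true) (gd_word G)) /mkseq filter_map. Qed.

Lemma size_kept_pos : size kept_pos = N'.
Proof. by rewrite /npts word_removed size_map. Qed.

Lemma kpos_bound i : i < N' -> kpos i < N /\ kept (kpos i).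
Proof.
rewrite -size_kept_pos => /(mem_nth 0); rewrite mem_filter mem_iota.
by case/andP=> -> /andP[_ ->].
Qed.

Lemma kept_kpos q : q < N -> kept q -> exists2 i, i < N' & kpos i = q.
Proof.
move=> qN kq; have qk : q \in kept_pos by rewrite mem_filter kq mem_iota.
by exists (index q kept_pos); rewrite -?size_kept_pos ?index_mem // /kpos nth_index.
Qed.

Lemma kpos_leq : {in [pred i | i < N'] &, {mono kpos : i j / i <= j}}.
Proof.
apply: leq_mono_in => i j; rewrite !inE -size_kept_pos => iN jN.
apply: (sorted_ltn_nth ltn_trans) => //.
exact/sorted_filter/iota_ltn_sorted/ltn_trans.
Qed.

Lemma kpos_ltn : {in [pred i | i < N'] &, {mono kpos : i j / i < j}}.
Proof. exact: leqW_mono_in kpos_leq. Qed.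

Lemma not_kept_gap i q : i < N' -> kpos i < q < N ->
  (i.+1 < N' -> q < kpos i.+1) -> ~~ kept q.
Proof.
move=> iN /andP[iq qN] q_next; apply/negP => /(kept_kpos qN) [j jN eq_q].
move: iq; rewrite -eq_q kpos_ltn ?inE // => ij.
have ijN : i.+1 < N' by apply: leq_ltn_trans jN.
by move: (q_next ijN); rewrite -eq_q kpos_ltn ?inE //; lia.
Qed.

Lemma not_kept_first q : q < N -> q < kpos 0 -> ~~ kept q.
Proof.
move=> qN q0; apply/negP => /(kept_kpos qN) [j jN eq_q].
by move: q0; rewrite -eq_q ltnNge kpos_leq ?inE //; apply: leq_ltn_trans jN.
Qed.

Definition embed (y : 'I_N') : 'I_N := Ordinal (proj1 (kpos_bound (ltn_ord y))).

Lemma embed_kept (y : 'I_N') : kept (embed y).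
Proof. exact: proj2 (kpos_bound (ltn_ord y)). Qed.

Lemma embed_inj : injective embed.
Proof.
move=> x y /(congr1 val) /= /eqP; rewrite eqn_leq !kpos_leq ?inE // -eqn_leq.
by move/eqP/val_inj.
Qed.

Lemma endpt_embed (y : 'I_N') : endpt G' y = endpt G (embed y).
Proof. by rewrite /endpt word_removed (nth_map 0) // size_kept_pos. Qed.

Lemma wf_removed : gauss_wf G'.
Proof.
apply/andP; split; first exact/filter_uniq/(gd_uniq wf).
apply/allP => e; rewrite /= !mem_filter => /andP[-> /(partner_in wf)].
by rewrite /partner.
Qed.

Lemma embed_mate (y : 'I_N') : embed (mate y) = mate (embed y).
Proof.
by apply: (endpt_inj wf); rewrite -endpt_embed (endpt_mate wf_removed) (endpt_mate wf) endpt_embed.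
Qed.

Lemma next_kept (u : 'I_N') : exists2 j, 0 < j &
  val (embed (ordS u)) = (kpos u + j) %% N /\
  forall l, 0 < l < j -> ~~ kept ((kpos u + l) %% N).
Proof.
have uN' := ltn_ord u; have [uN _] := kpos_bound uN'.
have [u1N' | last_u] := ltnP u.+1 N'.
  have [u1N _] := kpos_bound u1N'.
  have lt_u : kpos u < kpos u.+1 by rewrite kpos_ltn ?inE.
  exists (kpos u.+1 - kpos u); first by lia.
  rewrite /= (modn_small u1N') subnKC ?(ltnW lt_u) // modn_small //; split=> // l l_gap.
  rewrite modn_small; last by lia.
  by apply: (@not_kept_gap u) => //; lia.
have N'0 : 0 < N' by lia.
have ordS_u : u.+1 %% N' = 0 by rewrite (_ : u.+1 = N') ?modnn //; lia.
have [k0N _] := kpos_bound N'0.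
exists (N - kpos u + kpos 0); first by lia.
rewrite /= ordS_u (_ : kpos u + _ = kpos 0 + N); last by lia.
rewrite modnDr modn_small //; split=> // l l_gap.
have [before_end | after_end] := ltnP (kpos u + l) N.
  rewrite modn_small //; apply: (@not_kept_gap u) => //; lia.
rewrite -{1}(subnK after_end) modnDr modn_small; last by lia.
by apply: not_kept_first; lia.
Qed.

(* The full transposition chain: removed positions step along the circle,
   kept positions follow sigma.  Its orbits are the cycles of G'. *)
Definition skip : {perm 'I_N} := chain k.

Lemma skip_removed (x : 'I_N) : ~~ kept x -> skip x = ordS x.
Proof. by rewrite /skip tchainE // negbK => ->. Qed.

Lemma skip_kept (x : 'I_N) : kept x -> skip x = sigma x.
Proof. by rewrite /skip tchainE // => /negbTE ->. Qed.

Lemma skip_walk (x : 'I_N) l : (forall l', l' < l -> ~~ kept ((x + l') %% N)) ->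
  val ((skip ^+ l)%g x) = (x + l) %% N.
Proof.
elim: l => [|l IH] run; first by rewrite expg0 perm1 addn0 modn_small.
have IHl : val ((skip ^+ l)%g x) = (x + l) %% N by apply: IH => l' ?; apply: run; lia.
rewrite expgSr permM skip_removed; last by rewrite IHl; apply: run.
by rewrite /= IHl -addn1 modnDml addn1 addnS.
Qed.

Lemma skip_first_return (z : 'I_N') : exists2 j, 0 < j &
  (skip ^+ j)%g (embed z) = embed (cstep z) /\
  forall l, 0 < l < j -> ~~ kept ((skip ^+ l)%g (embed z)).
Proof.
have [j j_gt0 [next gap]] := next_kept (mate z).
have skip1 : val (skip (embed z)) = (kpos (mate z) + 1) %% N.
  by rewrite skip_kept ?embed_kept // (cycle_permE wf) -embed_mate /= addn1.
have walk l : l < j -> val ((skip ^+ l.+1)%g (embed z)) = (kpos (mate z) + l.+1) %% N.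
  move=> lt_lj; rewrite expgS permM skip_walk.
    by rewrite skip1 modnDml -addnA add1n.
  by move=> l' ?; rewrite skip1 modnDml -addnA add1n; apply: gap; lia.
exists j => //; split=> [|l /andP[l_gt0 lt_lj]].
  by apply: val_inj; rewrite /cstep next -(prednK j_gt0) walk //; lia.
by rewrite -(prednK l_gt0) walk ?prednK //; [apply: gap; lia | lia].
Qed.

Lemma embed_iter_cstep n (x : 'I_N') :
  embed (iter n (@cstep G') x) \in porbit skip (embed x).
Proof.
elim: n => [|n IH]; first exact: porbit_id.
have [j _ [jx _]] := skip_first_return (iter n (@cstep G') x).
by rewrite iterS -jx; apply: porbit_trans IH _; apply: mem_porbit.
Qed.

Lemma connect_skip_power m (x y : 'I_N') :
  embed y = (skip ^+ m)%g (embed x) -> fconnect (@cstep G') x y.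
Proof.
elim/ltn_ind: m x y => m IH x y ym.
have [m0 | m_gt0] := posnP m.
  by move: ym; rewrite m0 expg0 perm1 => /embed_inj ->; apply: connect0.
have [j j_gt0 [jx gap]] := skip_first_return x.
have [lt_mj | le_jm] := ltnP m j.
  by have := gap m; rewrite m_gt0 lt_mj -ym embed_kept => /(_ isT).
apply: connect_trans (fconnect1 _ x) (IH (m - j) _ _ _ _); first by lia.
by rewrite -jx -permM -expgD subnKC.
Qed.

Lemma fconnect_skip (x y : 'I_N') :
  fconnect (@cstep G') x y = (embed y \in porbit skip (embed x)).
Proof.
apply/idP/porbitP => [/iter_findex <- | [m]]; last exact: connect_skip_power.
by apply/porbitP; apply: embed_iter_cstep.
Qed.

Lemma porbits_skip : 0 < N' -> porbits skip = [set porbit skip (embed y) | y : 'I_N'].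
Proof.
move=> N'_gt0; apply/setP => S; apply/imsetP/imsetP => -[x _ ->]; last by exists (embed x).
have [k0N k0] := kpos_bound N'_gt0.
have ex_kept : exists l, kept ((x + l) %% N).
  exists (kpos 0 + N - x); rewrite (_ : x + _ = kpos 0 + N) ?modnDr ?modn_small //.
  by have := ltn_ord x; lia.
have [l kl l_min] := ex_minnP ex_kept.
have walk : val ((skip ^+ l)%g x) = (x + l) %% N.
  by apply: skip_walk => l' lt_l'; apply/negP => /l_min; lia.
have [i iN' ki] := kept_kpos (ltn_pmod _ N_gt0) kl.
exists (Ordinal iN') => //; rewrite -(porbit_perm skip l x); congr porbit.
by apply: val_inj; rewrite walk /= ki.
Qed.

(* with no chord left, skip is the rotation of the circle: a single orbit *)
Lemma card_porbits_skip_empty : N' = 0 -> #|porbits skip| = 1.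
Proof.
move=> N'0; have none q : q < N -> ~~ kept q.
  by move=> qN; apply/negP => /(kept_kpos qN) [i]; rewrite N'0.
pose x0 : 'I_N := Ordinal N_gt0.
apply/eqP/cards1P; exists (porbit skip x0); apply/setP => S; rewrite inE.
apply/imsetP/eqP => [[x _ ->] | ->]; last by exists x0.
rewrite -(porbit_perm skip x x0); congr porbit; apply: val_inj.
rewrite skip_walk => [|l' _]; last exact: none (ltn_pmod _ N_gt0).
by rewrite /= add0n modn_small.
Qed.

(* s_G' counts the orbits of skip: each orbit is determined by its trace on
   the kept positions, which is a cycle of G' *)
Lemma ncycles_removed : ncycles G' = #|porbits skip|.
Proof.
rewrite /ncycles; have [N'0 | N'_gt0] := eqVneq N' 0.
  by rewrite card_porbits_skip_empty.
rewrite porbits_skip ?lt0n //.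
pose trace (S : {set 'I_N}) := [set y : 'I_N' | embed y \in S].
have trace_inj : {in [set porbit skip (embed y) | y : 'I_N'] &, injective trace}.
  move=> _ _ /imsetP[x _ ->] /imsetP[y _ ->] /setP /(_ x).
  by rewrite !inE porbit_id => /esym yx; apply/eqP; rewrite eq_porbit_mem.
rewrite -(card_in_imset trace_inj) -imset_comp; congr #|pred_of_set _|.
apply: eq_imset => x; apply/setP => y.
by rewrite !inE /gcycle -fconnect_orbit fconnect_skip.
Qed.

Lemma initial_removed_in l : l \in removed k -> (l, true) \in gd_word G.
Proof.
case/mapP=> t _ ->; have e_in := endpt_in (v t); have := partner_in wf e_in.
by move: e_in; rewrite /partner; case: (endpt G (v t)) => c [].
Qed.

Lemma removed_initials :
  perm_eq [seq e <- gd_word G | e.2 & e.1 \in removed k] [seq (l, true) | l <- removed k].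
Proof.
apply: uniq_perm; first exact/filter_uniq/(gd_uniq wf).
  by rewrite map_inj_uniq ?removed_uniq // => l1 l2 [].
case=> l c; rewrite mem_filter /=; apply/idP/mapP => [/andP[/andP[-> lr] _] | [l' lr [-> ->]]].
  by exists l.
by rewrite lr initial_removed_in.
Qed.

Lemma nchords_removed : nchords G' + k = nchords G.
Proof.
rewrite /nchords /= count_filter -[RHS]size_filter.
rewrite -(count_predC (fun e => e.1 \notin removed k)) !count_filter.
have -> : count (predI (fun e => e.2) (fun e => e.1 \notin removed k)) (gd_word G) =
  count (predI (fun e => e.1 \notin removed k) (fun e => e.2)) (gd_word G).
  by apply: eq_count => e; rewrite /= andbC.
congr (_ + _); rewrite -size_filter (@eq_filter _ _ (fun e => e.2 && (e.1 \in removed k))).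
  by rewrite (perm_size removed_initials) !size_map size_iota.
by case=> l c; rewrite /= negbK andbC.
Qed.

(* as g = (n - s + 1)/2 and G' has k chords fewer, g(G') < g(G) is an
   inequality between orbit counts *)
Lemma genus_drop_iff : (genus G' < genus G)%R <-> #|porbits sigma| < #|porbits skip| + k.
Proof.
rewrite /genus -nchords_removed ncycles_removed (ncycles_porbits wf N_gt0).
by rewrite -(ltr_nat rat) !natrD; split=> ?; lra.
Qed.

(* v_(i+1) is reached by a cycle exactly when it passes from v_i onwards *)
Lemma shared_orbit_iff_cycle_condition :
  (exists i j, [/\ 1 <= i, i < j, j <= k.+1 & v j \in porbit sigma (v i)]) <->
  exists x : 'I_N, exists i j : nat,
    [/\ i != j, i <= k, j <= k,
        passes_from (gcycle x) (vpos G p i) & passes_from (gcycle x) (vpos G p j)].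
Proof.
have passesE (x : 'I_N) i : passes_from (gcycle x) (vpos G p i) <-> v i.+1 \in porbit sigma x.
  by rewrite -ordS_v; apply: (passes_fromE wf x (v i)).
split=> [[i [j [i_gt0 lt_ij le_jk ij]]] | [x [i [j [neq_ij le_ik le_jk /passesE xi /passesE xj]]]]].
  exists (v i), i.-1, j.-1; split; try lia.
    by apply/passesE; rewrite prednK ?porbit_id.
  by apply/passesE; rewrite prednK //; lia.
have [lt_ij | lt_ji | eq_ij] := ltngtP i j; last by rewrite eq_ij eqxx in neq_ij.
  exists i.+1, j.+1; split; try lia.
  by apply: porbit_trans xj; rewrite porbit_sym.
exists j.+1, i.+1; split; try lia.
by apply: porbit_trans xi; rewrite porbit_sym.
Qed.
End Bridge.

Theorem mainTheorem7 (G : gauss_diagram) (b : bool) (p k : nat) :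
  gauss_wf G -> 1 <= k -> is_bridge G b p k ->
  (genus (remove_bridge_chords G p k) < genus G)%R <->
  exists x : 'I_(npts G), exists i j : nat,
    [/\ i != j, i <= k, j <= k,
        passes_from (gcycle x) (vpos G p i) & passes_from (gcycle x) (vpos G p j)].
Proof.
move=> wf k_gt0 bridge.
have v_neq_w' m (_ : m < k) := v_neq_w wf bridge m.
apply: (iff_trans (genus_drop_iff wf k_gt0 bridge)).
apply: (iff_trans (tchain_gain_iff_split (cycle_perm wf) v_neq_w')).
apply: (iff_trans (split_iff_shared_orbit v_neq_w' (chain_w wf k_gt0 bridge))).
exact: shared_orbit_iff_cycle_condition.
Qed.
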